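(* Let $M=(\mathbf{D},\mathbf{I},\Sigma,\sim)$ be a $k$-sight model, $\sigma\in\Sigma$, and $\{z,z'\}=\{x,y\}$. If $M,\sigma\models K_zz'$, then $M,\sigma\models [z]K_zz'$.
   Context: Vocabulary: $Pred$ set of predicate symbols with arities containing a binary symbol $R$; $Cons$ nonempty finite set of constants; $Var=\{x,y\}$. A model is $M=(\mathbf{D},\mathbf{I},\Sigma,\sim)$: $\mathbf{D}$ nonempty finite; $\mathbf{I}(P)\subseteq\mathbf{D}^m$ for $m$-ary $P$, with $\mathbf{R}:=\mathbf{I}(R)$ serial; $\mathbf{I}(c)\in\mathbf{D}$ for $c\in Cons$, every element of $\mathbf{D}$ being some $\mathbf{I}(c)$; $\Sigma\subseteq\mathbf{D}^{Var}$ a nonempty set of assignments (situations); $\sim_x,\sim_y$ equivalence relations on $\Sigma$. Fix a natural number $k$. For $s\in\mathbf{D}$: $\mathbb{D}^0(s)=\{s\}$, $\mathbb{D}^{m+1}(s)=\mathbb{D}^m(s)\cup\{t:\exists u\in\mathbb{D}^m(s),(u,t)\in\mathbf{R}\text{ or }(t,u)\in\mathbf{R}\}$. $M$ is a $k$-sight model if whenever $\sigma\sim_w\sigma'$ ($w\in Var$), then $\sigma(w')=\sigma'(w')$ for each $w'\in Var$ with $\sigma(w')\in\mathbb{D}^k(\sigma(w))$. Semantics: $M,\sigma\models K_zz'$ iff $\sigma'(z')=\sigma(z')$ for all $\sigma'\in\Sigma$ with $\sigma'\sim_z\sigma$. For $\sigma,\sigma'\in\mathbf{D}^{Var}$, $\mathsf{R}^z\sigma\sigma'$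 iff $(\sigma(z),\sigma'(z))\in\mathbf{R}$ and $\sigma(z')=\sigma'(z')$ for the other variable $z'$; $\mathsf{R}^z(\Gamma)=\{\sigma':\exists\sigma\in\Gamma,\mathsf{R}^z\sigma\sigma'\}$, $\mathsf{R}^z(\sigma)=\mathsf{R}^z(\{\sigma\})$; $\Sigma|\sigma=\{\sigma'\in\Sigma:\sigma\sim_w\sigma'\text{ for some }w\in Var\}$. $M,\sigma_1\models[z]\varphi$ iff for all $\sigma_2\in\mathsf{R}^z(\sigma_1)$, $(\mathbf{D},\mathbf{I},\Sigma',\sim'),\sigma_2\models\varphi$, where $\Sigma'=\{\sigma_2\}$ if $\sigma_2(x)\in\mathbb{D}^k(\sigma_2(y))$, and otherwise $\Sigma'=\{\sigma'\in\mathsf{R}^z(\Sigma|\sigma_1):\sigma'(x)\notin\mathbb{D}^k(\sigma'(y))\}$; and $\sigma'_1\sim'_w\sigma'_2$ iff $\sigma'_1(w)=\sigma'_2(w)$ for $w\in Var$. *)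

From Stdlib Require Import List.
Import ListNotations.

Inductive var := vx | vy.

Definition other (z : var) : var := match z with vx => vy | vy => vx end.

Definition Finite (T : Type) : Prop := exists l : list T, forall t, In t l.

Record model := Model {
  D : Type;
  D_finite : Finite D;
  D_nonempty : inhabited D;
  Pred : Type;
  arity : Pred -> nat;
  R : Pred;
  R_binary : arity R = 2;
  IP : Pred -> list D -> Prop;          (* I(P) as a set of tuples (lists) *)
  IP_arity : forall P l, IP P l -> length l = arity P;
  R_serial : forall a : D, exists b, IP R [a; b];
  Cons : Type;
  Cons_finite : Finite Cons;
  Cons_nonempty : inhabited Cons;
  IC : Cons -> D;
  IC_surj : forall d : D, exists c, IC c = d;
  Sigma : (var -> D) -> Prop;
  Sigma_nonempty : exists s, Sigma s;
  sim : var -> (var -> D) -> (var -> D) -> Prop;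
  sim_dom : forall w s t, sim w s t -> Sigma s /\ Sigma t;
  sim_refl : forall w s, Sigma s -> sim w s s;
  sim_sym : forall w s t, sim w s t -> sim w t s;
  sim_trans : forall w s t u, sim w s t -> sim w t u -> sim w s u
}.

Section Sem.
Variable M : model.
Variable k : nat.

Definition Rel (a b : D M) : Prop := IP M (R M) [a; b].

Fixpoint Dm (m : nat) (s t : D M) : Prop :=
  match m with
  | 0 => t = s
  | S m' => Dm m' s t \/ exists u, Dm m' s u /\ (Rel u t \/ Rel t u)
  end.

Definition assignment := var -> D M.

Definition Rz (z : var) (s s' : assignment) : Prop :=
  Rel (s z) (s' z) /\ s (other z) = s' (other z).

Definition restr (Sg : assignment -> Prop)
  (sm : var -> assignment -> assignment -> Prop) (s s' : assignment) : Prop :=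
  Sg s' /\ exists w, sm w s s'.

Inductive form :=
| FK (z z' : var)
| FBox (z : var) (phi : form).

(* Satisfaction, relative to the fixed D, I, with varying (Sigma, ~). *)
Fixpoint sat (Sg : assignment -> Prop)
  (sm : var -> assignment -> assignment -> Prop) (s1 : assignment) (f : form) : Prop :=
  match f with
  | FK z z' => forall s', Sg s' -> sm z s' s1 -> s' z' = s1 z'
  | FBox z phi =>
      forall s2, Rz z s1 s2 ->
        let Sg' := fun s' =>
          (Dm k (s2 vy) (s2 vx) -> s' = s2) /\
          (~ Dm k (s2 vy) (s2 vx) ->
             (exists s, restr Sg sm s1 s /\ Rz z s s') /\ ~ Dm k (s' vy) (s' vx)) in
        let sm' := fun (w : var) (a b : assignment) => a w = b w in
        sat Sg' sm' s2 phi
  end.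

End Sem.

Definition k_sight (k : nat) (M : model) : Prop :=
  forall w (s s' : var -> D M), sim M w s s' ->
    forall w', Dm M k (s w) (s w') -> s w' = s' w'.

(* Under [z] the agent z' stays put, so it suffices that z' occupies the same
   position in every situation of Sigma|s as in s.  For situations
   z-indistinguishable from s this is exactly K_z z'.  For situations
   z'-indistinguishable from s it is k-sight: every element lies in its own
   k-neighbourhood, so an agent always knows where it itself stands.  If the
   successor situation is close, the updated Sigma is a singleton and there is
   nothing to prove. *)

From Stdlib Require Import Classical.

Lemma var_eq_or_other (w z : var) : w = z \/ w = other z.
Proof. destruct w, z; simpl; auto. Qed.

Lemma Dm_refl (M : model) (k : nat) (a : D M) : Dm M k a a.
Proof. induction k; simpl; auto. Qed.

Lemma k_sight_sim_self (k : nat) (M : model) (w : var) (s t : var -> D M) :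
  k_sight k M -> sim M w s t -> s w = t w.
Proof. intros Hk Hst. exact (Hk w s t Hst w (Dm_refl M k (s w))). Qed.

Lemma restr_fixes_other_of_K (k : nat) (M : model) (z : var) (s t : var -> D M) :
  k_sight k M ->
  sat M k (Sigma M) (sim M) s (FK z (other z)) ->
  restr M (Sigma M) (sim M) s t -> t (other z) = s (other z).
Proof.
  intros Hk HK [Ht [w Hst]].
  destruct (var_eq_or_other w z) as [-> | ->].
  - exact (HK t Ht (sim_sym M z s t Hst)).
  - symmetry. exact (k_sight_sim_self k M (other z) s t Hk Hst).
Qed.

Theorem fact6 (k : nat) (M : model) (s : var -> D M) (z : var) :
  k_sight k M -> Sigma M s ->
  sat M k (Sigma M) (sim M) s (FK z (other z)) ->
  sat M k (Sigma M) (sim M) s (FBox z (FK z (other z))).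
Proof.
  intros Hk _ HK; simpl.
  intros s2 [_ Hs2] s' [Hclose Hfar] _.
  destruct (classic (Dm M k (s2 vy) (s2 vx))) as [Hd | Hd].
  - now rewrite (Hclose Hd).
  - destruct (Hfar Hd) as [[t [Hrestr [_ Hs']]] _].
    rewrite <- Hs', <- Hs2.
    exact (restr_fixes_other_of_K k M z s t Hk HK Hrestr).
Qed.
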